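(* Let $\mathcal I_1\subset\mathbb C[L^-\mathrm{GL}_K]$ be the ideal of the scheme-theoretic image $\mathcal M^1$ of $\pi_1$, and let $\mathcal I'_1$ be the ideal generated by the elements $T^{(m)}_{ab}T^{(n+k)}_{cd}-T^{(n)}_{ab}T^{(m+k)}_{cd}$ and $T^{(m)}_{a_1b_1}T^{(n)}_{a_2b_2}-T^{(m)}_{a_1b_2}T^{(n)}_{a_2b_1}$ for all $m,n,k\in\mathbb Z_{\ge0}$ and $a,b,c,d,a_1,a_2,b_1,b_2\in\{1,\dots,K\}$. If $\mathcal I'_1$ is a radical ideal, then $\mathcal I_1=\mathcal I'_1$.
   Context: $L^-\mathrm{GL}_K$ is the group scheme of power series $1+\sum_{i\ge1}g_iz^{-i}$, $g_i\in\mathfrak{gl}_K$, with $\mathbb C[L^-\mathrm{GL}_K]=\mathbb C[T^{(n)}_{ab}:n\ge0,1\le a,b\le K]$, $T^{(n)}_{ab}$ the $(a,b)$ entry of $g_{n+1}$. $\mathcal M(1,K)=\mathrm{Rep}(1,K)/\!/\mathrm{GL}_1$, where $\mathrm{Rep}(1,K)$ consists of $(B,\psi,\overline\psi)$, $B\in\mathbb C$, $\psi\in\mathrm{Mat}_{1\times K}$, $\overline\psi\in\mathrm{Mat}_{K\times1}$, $\lambda\cdot(B,\psi,\overline\psi)=(B,\lambda\psi,\lambda^{-1}\overline\psi)$. $\pi_1:\mathcal M(1,K)\to L^-\mathrm{GL}_K$ sends $(B,\psi,\overline\psi)$ to $1+\overline\psi(z-\widetilde B/2)^{-1}\psi$,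 $\widetilde B=B+\psi\overline\psi$; its image consists of series $1+g/(z-b)$ with $b\in\mathbb C$ and $\mathrm{rank}(g)\le1$. *)

From HB Require Import structures.
From mathcomp Require Import all_boot all_order all_algebra.
From mathcomp Require Import finmap.
From mathcomp Require Import monalg.
From mathcomp Require Import complex.
From mathcomp Require Import reals.

Set Implicit Arguments.
Unset Strict Implicit.
Unset Printing Implicit Defensive.

Import Order.TTheory GRing.Theory Num.Theory.
Local Open Scope ring_scope.

Definition Cplx (R : realType) := (complex R).

(* Index set of the coordinates T^{(n)}_{ab}, n >= 0, 1 <= a,b <= K
   (here a, b range over 'I_K = {0,...,K-1}). *)
Definition Tidx (K : nat) := (nat * 'I_K * 'I_K)%type.

(* C[L^- GL_K] = C[T^{(n)}_{ab} : n >= 0, a, b]: the polynomial ring in the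
   (infinitely many) variables indexed by Tidx K, i.e. the monoid algebra of
   the free commutative monoid on Tidx K. *)
Definition CLGL (R : realType) (K : nat) := {malg (Cplx R)[{cmonom (Tidx K)}]}.

Definition Tv (R : realType) (K : nat) (n : nat) (a b : 'I_K) : CLGL R K :=
  << ucm ((n, a, b) : Tidx K) >>.

(* Coordinates of Rep(1,K): None = B, Some (inl i) = psi_i, Some (inr i) = psibar_i. *)
Definition Ridx (K : nat) := option ('I_K + 'I_K)%type.

Definition CRep (R : realType) (K : nat) := {malg (Cplx R)[{cmonom (Ridx K)}]}.

Definition Bv (R : realType) (K : nat) : CRep R K := << ucm (None : Ridx K) >>.
Definition psiv (R : realType) (K : nat) (i : 'I_K) : CRep R K :=
  << ucm (Some (inl i) : Ridx K) >>.
Definition psibv (R : realType) (K : nat) (i : 'I_K) : CRep R K :=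
  << ucm (Some (inr i) : Ridx K) >>.

Definition Btilde (R : realType) (K : nat) : CRep R K :=
  Bv R K + \sum_(i < K) psiv R i * psibv R i.

(* pi_1(B,psi,psibar) = 1 + psibar (z - Btilde/2)^{-1} psi
                      = 1 + sum_{n>=0} psibar psi (Btilde/2)^n z^{-n-1},
   so the coordinate T^{(n)}_{ab} (entry (a,b) of g_{n+1}) pulls back to
   psibar_a psi_b (Btilde/2)^n. *)
Definition pi1_img (R : realType) (K : nat) (t : Tidx K) : CRep R K :=
  let: (n, a, b) := t in
  psibv R a * psiv R b * ((2%:R)^-1%:MP * Btilde R K) ^+ n.

(* The pullback pi_1^* : C[L^- GL_K] -> C[Rep(1,K)] (C-algebra morphism
   determined by the images of the variables). Its image lies in the
   GL_1-invariants C[Rep(1,K)]^{GL_1} = C[M(1,K)]. *)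
Definition pi1_pullback (R : realType) (K : nat) (f : CLGL R K) : CRep R K :=
  mmap (fun c : Cplx R => c%:MP)
       (fun m : {cmonom (Tidx K)} =>
          \prod_(t <- finsupp m) pi1_img R t ^+ (m t)) f.

(* I_1 : the ideal of the scheme-theoretic image of pi_1, i.e. the kernel
   of pi_1^* : C[L^- GL_K] -> C[M(1,K)] (subset of C[Rep(1,K)]). *)
Definition I1 (R : realType) (K : nat) (f : CLGL R K) : Prop :=
  pi1_pullback f = 0.

Definition ideal_gen (A : comNzRingType) (P : A -> Prop) (f : A) : Prop :=
  exists s : seq (A * A), (forall p, p \in s -> P p.2) /\
                          f = \sum_(p <- s) p.1 * p.2.

Definition radical_ideal (A : comNzRingType) (I : A -> Prop) : Prop :=
  forall (f : A) (n : nat), I (f ^+ n) -> I f.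

Definition I1'_gens (R : realType) (K : nat) (g : CLGL R K) : Prop :=
  (exists (m n k : nat) (a b c d : 'I_K),
      g = Tv R m a b * Tv R (n + k) c d - Tv R n a b * Tv R (m + k) c d)
  \/
  (exists (m n : nat) (a1 a2 b1 b2 : 'I_K),
      g = Tv R m a1 b1 * Tv R n a2 b2 - Tv R m a1 b2 * Tv R n a2 b1).

Definition I1' (R : realType) (K : nat) : CLGL R K -> Prop :=
  ideal_gen (@I1'_gens R K).

From HB Require Import structures.
From mathcomp Require Import all_boot all_order all_algebra.
From mathcomp Require Import finmap monalg complex reals.
From mathcomp Require Import ring.

(* The substitution B |-> 2B - psi psibar is a ring endomorphism of C[Rep(1,K)]
   sending Btilde/2 to B; composed with pi_1^* it gives the monomial map
   T^(n)_ab |-> psibar_a psi_b B^n, so ker pi_1^* lies in the kernel of that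
   monomial map.  The kernel of a monomial map is spanned by the differences of
   monomials with equal images, and the image of a product of T's only records
   its total degree and the multisets of its row and column indices.  Two
   products with the same such data are congruent modulo I'_1: the first family
   of generators moves degree between two factors, so all the degree can be put
   on one factor, and the second family swaps column indices, so a prescribed
   factor T_ab can be brought to the front and cancelled.  Conversely pi_1^*
   kills both families of generators. *)

Set Implicit Arguments.
Unset Strict Implicit.
Unset Printing Implicit Defensive.

Import GRing.Theory Num.Theory.
Local Open Scope ring_scope.

Section IdealGen.
Variables (A : comNzRingType) (P : A -> Prop).
Local Notation J := (ideal_gen P).

Lemma ideal_gen0 : J 0.
Proof. by exists [::]; rewrite big_nil. Qed.

Lemma mem_ideal_gen x : P x -> J x.
Proof.
by move=> Px; exists [:: (1, x)]; rewrite big_seq1 mul1r; split=> // p /[!inE] /eqP->.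
Qed.

Lemma ideal_genD x y : J x -> J y -> J (x + y).
Proof.
move=> [s [Ps ->]] [s' [Ps' ->]]; exists (s ++ s'); rewrite big_cat; split=> // p.
by rewrite mem_cat => /orP[/Ps|/Ps'].
Qed.

Lemma ideal_genMl r x : J x -> J (r * x).
Proof.
move=> [s [Ps ->]]; exists [seq (r * p.1, p.2) | p <- s]; split.
  by move=> _ /mapP[p ps ->]; exact: (Ps p ps).
by rewrite big_map mulr_sumr; apply: eq_bigr => p _; rewrite mulrA.
Qed.

Lemma ideal_genN x : J x -> J (- x).
Proof. by rewrite -mulN1r; apply: ideal_genMl. Qed.

Lemma ideal_gen_sum (I : eqType) (s : seq I) (F : I -> A) :
  (forall i, i \in s -> J (F i)) -> J (\sum_(i <- s) F i).
Proof.
move=> JF; rewrite big_seq; elim/big_rec: _ => [|i x /JF]; first exact: ideal_gen0.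
exact: ideal_genD.
Qed.

Lemma ideal_gen_subM x y x' y' :
  J (x - y) -> J (x' - y') -> J (x * x' - y * y').
Proof.
move=> Jxy Jxy'; have -> : x * x' - y * y' = x * (x' - y') + y' * (x - y).
  by rewrite mulrBr mulrBr [y' * _]mulrC [y' * y]mulrC addrA subrK.
by apply: ideal_genD; apply: ideal_genMl.
Qed.

Lemma rmorph_ideal_gen0 (B : nzRingType) (g : {rmorphism A -> B}) x :
  (forall y, P y -> g y = 0) -> J x -> g x = 0.
Proof.
move=> gP [s [Ps ->]]; rewrite rmorph_sum big1_seq // => p /andP[_ ps].
by rewrite rmorphM (gP p.2) ?mulr0 //; exact: Ps.
Qed.

End IdealGen.

Lemma cm_big (I : choiceType) (T : Type) (s : seq T) (F : T -> cmonom I) (i : I) :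
  (\big[mmul/mone]_(x <- s) F x) i = (\sum_(x <- s) F x i)%N.
Proof.
exact: (@big_morph _ _ (fun m : cmonom I => m i) 0%N addn mone mmul (cmM i) (cm1 i)).
Qed.

Section CmonomEval.
Variables (I : choiceType) (S : comNzRingType) (v : I -> S).

Definition cmeval (m : cmonom I) : S := \prod_(i <- finsupp m) v i ^+ m i.

Lemma cmevalEw (d : {fset I}) (m : cmonom I) : (finsupp m `<=` d)%fset ->
  cmeval m = \prod_(i <- d) v i ^+ m i.
Proof.
move=> le_md; rewrite /cmeval (big_fset_incl _ le_md) // => i _.
by rewrite -cmE_neq0 negbK => /eqP->.
Qed.

Lemma cmeval1 : cmeval mone = 1.
Proof. by rewrite /cmeval mdom1 big_seq_fset0. Qed.

Lemma cmevalM (m m' : cmonom I) : cmeval (mmul m m') = cmeval m * cmeval m'.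
Proof.
rewrite (cmevalEw (d := finsupp m `|` finsupp m')%fset) ?mdomD //.
rewrite (cmevalEw (fsubsetUl _ (finsupp m'))) (cmevalEw (fsubsetUr (finsupp m) _)).
by rewrite -big_split; apply: eq_bigr => i _; rewrite cmM exprD.
Qed.

HB.instance Definition _ :=
  isMultiplicative.Build (cmonom I) S cmeval (cmevalM, cmeval1).

Lemma cmevalU i : cmeval (ucm i) = v i.
Proof. by rewrite /cmeval mdomU big_seq_fset1 cmUU expr1. Qed.

End CmonomEval.

Section CmonomSeq.
Variable I : choiceType.

Definition cmonom_seq (m : cmonom I) : seq I :=
  flatten [seq nseq (m i) i | i <- finsupp m].

Lemma cmonom_seqK (m : cmonom I) : \big[mmul/mone]_(i <- cmonom_seq m) ucm i = m.
Proof.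
apply/eqP/cmP => j; rewrite cm_big big_flatten big_map /=.
rewrite (eq_bigr (fun i => if i == j then m i else 0%N)); last first.
  move=> i _; elim: (m i) => [|n IH]; first by rewrite big_nil; case: eqP.
  by rewrite big_cons IH cmU; case: eqP.
rewrite -big_mkcond /=; case: (boolP (j \in finsupp m)) => jm.
  by rewrite -big_filter filter_pred1_uniq ?fset_uniq // big_seq1.
rewrite big_seq_cond big1 => [|i /andP[im /eqP ij]]; last by rewrite -ij im in jm.
by apply/esym/eqP; rewrite cmE_eq0.
Qed.

Lemma cmeval_seq (S : comNzRingType) (v : I -> S) (m : cmonom I) :
  cmeval v m = \prod_(i <- cmonom_seq m) v i.
Proof.
rewrite -{1}(cmonom_seqK m) (big_morph _ (@cmevalM _ _ v) (cmeval1 v)).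
by apply: eq_bigr => i _; rewrite cmevalU.
Qed.

Lemma malgU_mmul (R : comNzRingType) (m m' : cmonom I) :
  << mmul m m' >> = << m >> * << m' >> :> {malg R[cmonom I]}.
Proof. by rewrite malgM_def fgmulUU mulr1. Qed.

Lemma malgU_prod (R : comNzRingType) (T : Type) (s : seq T) (F : T -> cmonom I) :
  << \big[mmul/mone]_(x <- s) F x >> = \prod_(x <- s) << F x >> :> {malg R[cmonom I]}.
Proof. exact: (big_morph _ (@malgU_mmul R) (@mpolyC1E _ R)). Qed.

Lemma malgU_cmonom_seq (R : comNzRingType) (m : cmonom I) :
  << m >> = \prod_(i <- cmonom_seq m) << ucm i >> :> {malg R[cmonom I]}.
Proof. by rewrite -{1}(cmonom_seqK m) malgU_prod. Qed.

End CmonomSeq.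

Lemma mmap_cmevalU (I : choiceType) (K : conomType) (R : comNzRingType)
    (v : I -> {malg R[K]}) (i : I) :
  mmap (@malgC K R) (cmeval v) << ucm i >> = v i.
Proof. by rewrite mmapU cmevalU [X in X * _]/= mpolyC1E mul1r. Qed.

Lemma eq_mmap (K : choiceType) (G : zmodType) (S : nzRingType)
    (f f' : G -> S) (h h' : K -> S) :
  f =1 f' -> h =1 h' -> mmap f h =1 mmap f' h'.
Proof. by move=> ff' hh' x; rewrite !mmapE; apply: eq_bigr => m _; rewrite ff' hh'. Qed.

Lemma rmorph_mmap (K : choiceType) (G : zmodType) (S S' : nzRingType)
    (g : {rmorphism S -> S'}) (f : G -> S) (h : K -> S) x :
  g (mmap f h x) = mmap (g \o f) (g \o h) x.
Proof. by rewrite !mmapE rmorph_sum; apply: eq_bigr => m _; rewrite rmorphM. Qed.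

Lemma ideal_gen_monomial_kernel (K K' : conomType) (R : comNzRingType)
    (P : {malg R[K]} -> Prop) (key : K -> K') (f : {malg R[K]}) :
  (forall m m', key m = key m' -> ideal_gen P (<< m >> - << m' >>)) ->
  mmap (@malgC K' R) (fun m => << key m >>) f = 0 -> ideal_gen P f.
Proof.
move=> binomP; set S := msupp f => f0.
have fibre0 k : \sum_(m <- S | key m == k) f@_m = 0.
  rewrite -[RHS](mcoeff0 k) -f0 mmapE raddf_sum big_mkcond; apply: eq_bigr => m _.
  by rewrite /= mcoeffCM mcoeffU1; case: eqP; rewrite ?mulr1 ?mulr0.
(* Modulo the binomials, each monomial of f may be replaced by a fixed
   representative of its fibre, after which f collapses fibre by fibre. *)
pose rep k := nth mone S (find (fun m => key m == k) S).
have key_rep m : m \in S -> key (rep (key m)) = key m.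
  move=> mS; apply/eqP/(@nth_find _ mone (fun m' => key m' == key m)).
  by apply/hasP; exists m.
have -> : f = \sum_(m <- S) (f@_m)%:MP * (<< m >> - << rep (key m) >>)
            + \sum_(m <- S) (f@_m)%:MP * << rep (key m) >>.
  rewrite -big_split /= {1}[f]monalgE; apply: eq_bigr => m _.
  by rewrite -mulrDr subrK malgM_def fgmulUU mulr1 mul1m.
have -> : \sum_(m <- S) (f@_m)%:MP * << rep (key m) >> = 0.
  transitivity (\sum_(m <- S) \sum_(k <- undup (map key S) | key m == k)
                  (f@_m)%:MP * << rep k >>).
    apply: eq_big_seq => m mS; rewrite -big_filter.
    under eq_filter do rewrite eq_sym.
    by rewrite filter_pred1_uniq ?undup_uniq ?big_seq1 // mem_undup map_f.
  rewrite (exchange_big_dep predT) //=; apply: big1 => k _.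
  by rewrite -mulr_suml -(rmorph_sum (@malgC K R)) fibre0 rmorph0 mul0r.
rewrite addr0; apply: ideal_gen_sum => m mS; apply/ideal_genMl/binomP.
by rewrite key_rep.
Qed.

Section BinomialCongruence.
Variables (K : nat) (A : comNzRingType) (T : nat -> 'I_K -> 'I_K -> A).

Definition binomial_gens (g : A) : Prop :=
  (exists (m n k : nat) (a b c d : 'I_K),
      g = T m a b * T (n + k)%N c d - T n a b * T (m + k)%N c d)
  \/
  (exists (m n : nat) (a1 a2 b1 b2 : 'I_K),
      g = T m a1 b1 * T n a2 b2 - T m a1 b2 * T n a2 b1).

Lemma rmorph_binomial_gens (B : comNzRingType) (g : {rmorphism A -> B})
    (x y : 'I_K -> B) (z : B) :
  (forall n a b, g (T n a b) = x a * y b * z ^+ n) ->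
  forall h, binomial_gens h -> g h = 0.
Proof.
move=> gT h [[m [n [k [a [b [c [d ->]]]]]]] | [m [n [a1 [a2 [b1 [b2 ->]]]]]]];
  rewrite rmorphB !rmorphM !gT; [rewrite !exprD |]; ring.
Qed.

Implicit Types (s r : seq (Tidx K)) (t : Tidx K).

Definition tmonom s : A := \prod_(t <- s) T t.1.1 t.1.2 t.2.
Definition tdeg s : nat := \sum_(t <- s) t.1.1.
Definition trows s : seq 'I_K := [seq t.1.2 | t <- s].
Definition tcols s : seq 'I_K := [seq t.2 | t <- s].
Definition tflat s : seq (Tidx K) := [seq (0%N, t.1.2, t.2) | t <- s].

Definition same_shape s s' : Prop :=
  [/\ tdeg s = tdeg s', perm_eq (trows s) (trows s') & perm_eq (tcols s) (tcols s')].

Definition tcong s s' : Prop :=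
  same_shape s s' /\ ideal_gen binomial_gens (tmonom s - tmonom s').

Lemma same_shape_sym s s' : same_shape s s' -> same_shape s' s.
Proof. by case=> d r c; split; rewrite // perm_sym. Qed.

Lemma same_shape_trans s1 s2 s3 :
  same_shape s1 s2 -> same_shape s2 s3 -> same_shape s1 s3.
Proof.
case=> d r c [d' r' c']; split; first exact: etrans d d'.
  exact: perm_trans r r'.
exact: perm_trans c c'.
Qed.

Lemma same_shape_cons t s s' : same_shape (t :: s) (t :: s') -> same_shape s s'.
Proof. by case; rewrite /tdeg !big_cons /= !perm_cons => /addnI. Qed.

Lemma tcong_refl s : tcong s s.
Proof. by split; [split | rewrite subrr; exact: ideal_gen0]. Qed.

Lemma tcong_sym s s' : tcong s s' -> tcong s' s.
Proof. by case=> /same_shape_sym ? /ideal_genN; rewrite opprB. Qed.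

Lemma tcong_trans s1 s2 s3 : tcong s1 s2 -> tcong s2 s3 -> tcong s1 s3.
Proof.
case=> sh12 J12 [sh23 J23]; split; first exact: same_shape_trans sh12 sh23.
by rewrite -[tmonom s1](subrK (tmonom s2)) -addrA; apply: ideal_genD.
Qed.

Lemma tcong_cat s1 s2 s1' s2' :
  tcong s1 s1' -> tcong s2 s2' -> tcong (s1 ++ s2) (s1' ++ s2').
Proof.
case=> [[d r c] J] [[d' r' c'] J']; split; last first.
  by rewrite /tmonom !big_cat; apply: ideal_gen_subM.
split; first by move: d d'; rewrite /tdeg !big_cat => -> ->.
  by rewrite /trows !map_cat; apply: perm_cat.
by rewrite /tcols !map_cat; apply: perm_cat.
Qed.

Lemma tcong_cons t s s' : tcong s s' -> tcong (t :: s) (t :: s').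
Proof. exact: tcong_cat (tcong_refl [:: t]). Qed.

Lemma tcong_perm s s' : perm_eq s s' -> tcong s s'.
Proof.
move=> pss'; split; last by rewrite /tmonom (perm_big _ pss') subrr; exact: ideal_gen0.
by split; rewrite /tdeg ?(perm_big _ pss') // perm_map.
Qed.

Lemma tmonom2 t t' : tmonom [:: t; t'] = T t.1.1 t.1.2 t.2 * T t'.1.1 t'.1.2 t'.2.
Proof. by rewrite /tmonom big_cons big_seq1. Qed.

Lemma tcong_shift n p a b c d :
  tcong [:: (n, a, b); (p, c, d)] [:: ((n + p)%N, a, b); (0%N, c, d)].
Proof.
split; first by split; rewrite // /tdeg !big_cons !big_nil /= !addn0.
rewrite !tmonom2 /= mulrC [T (n + p)%N a b * _]mulrC addnC.
by apply: mem_ideal_gen; left; exists p, 0%N, n, c, d, a, b.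
Qed.

Lemma tcong_swap n p a b c d :
  tcong [:: (n, a, b); (p, c, d)] [:: (n, a, d); (p, c, b)].
Proof.
split; last by rewrite !tmonom2; apply: mem_ideal_gen; right; exists n, p, a, c, b, d.
split; [by rewrite /tdeg !big_cons | by [] | exact: (permEl (perm_catC [:: b] [:: d]))].
Qed.

Lemma tcong_concentrate t r : tcong (t :: r) ((tdeg (t :: r), t.1.2, t.2) :: tflat r).
Proof.
elim: r t => [|[[p c] d] r IH] [[n a] b] /=.
  by rewrite /tdeg big_seq1; exact: tcong_refl.
have -> : tdeg [:: (n, a, b), (p, c, d) & r] = tdeg (((n + p)%N, a, b) :: r).
  by rewrite /tdeg !big_cons addnA.
apply: tcong_trans (tcong_cat (tcong_shift n p a b c d) (tcong_refl r)) _.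
apply: tcong_trans (tcong_perm (permEl (perm_catCA [:: _] [:: _] r))) _.
apply: tcong_trans (tcong_cons _ (IH _)) _.
exact: tcong_perm (permEl (perm_catCA [:: _] [:: _] _)).
Qed.

Lemma tcong_front s a b : a \in trows s -> b \in tcols s ->
  exists n r, tcong s ((n, a, b) :: r).
Proof.
case/mapP=> [[[n a1] b1] t1s /= ->] bs.
have s_t1 := tcong_perm (perm_to_rem t1s).
have [<-|b1b] := eqVneq b1 b; first by exists n, (rem (n, a1, b1) s).
have : b \in tcols (rem (n, a1, b1) s).
  by move: bs; rewrite (perm_mem (perm_map _ (perm_to_rem t1s))) inE eq_sym (negPf b1b).
case/mapP=> [[[p a3] b3] t3s /= ->].
have rem_t3 := tcong_cons (n, a1, b1) (tcong_perm (perm_to_rem t3s)).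
exists n, ((p, a3, b1) :: rem (p, a3, b3) (rem (n, a1, b1) s)).
apply: tcong_trans s_t1 (tcong_trans rem_t3 _).
exact: tcong_cat (tcong_swap n p a1 b1 a3 b3) (tcong_refl _).
Qed.

Lemma tcong_same_shape s s' : same_shape s s' -> tcong s s'.
Proof.
have [N] := ubnP (size s); elim: N s s' => // N IH [|[[n a] b] r] s' /ltnSE size_r sh.
  by case: s' sh => [_|t s' [_ _ /perm_size]]; [exact: tcong_refl|].
have [deg rows cols] := sh.
have [n1 [r1 s'_front]] : exists n1 r1, tcong s' ((n1, a, b) :: r1).
  apply: tcong_front; first by rewrite -(perm_mem rows) mem_head.
  by rewrite -(perm_mem cols) mem_head.
have front_flat := tcong_concentrate (n1, a, b) r1.
have deg_eq : tdeg ((n1, a, b) :: r1) = tdeg ((n, a, b) :: r).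
  by case: s'_front => -[<-].
rewrite /= deg_eq in front_flat.
have flat_cong : tcong (tflat r) (tflat r1).
  apply: IH; first by rewrite size_map.
  apply: (@same_shape_cons (tdeg ((n, a, b) :: r), a, b)).
  apply: same_shape_trans (same_shape_sym (tcong_concentrate _ _).1) _.
  apply: same_shape_trans sh (same_shape_trans s'_front.1 front_flat.1).
apply: tcong_trans (tcong_concentrate _ _) (tcong_trans (tcong_cons _ flat_cong) _).
exact: tcong_sym (tcong_trans s'_front front_flat).
Qed.

End BinomialCongruence.

Lemma rmorph_monomial (S S' : comNzRingType) (g : {rmorphism S -> S'})
    (x y z : S) (x' y' z' : S') n :
  g x = x' -> g y = y' -> g z = z' -> g (x * y * z ^+ n) = x' * y' * z' ^+ n.
Proof. by move=> gx gy gz; rewrite !rmorphM rmorphXn gx gy gz. Qed.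

Section Pullback.
Variables (R : realType) (K : nat).
Local Notation C := (Cplx R).
Local Notation RI := (Ridx K).
Local Notation TI := (Tidx K).

HB.instance Definition _ := GRing.RMorphism.copy (@pi1_pullback R K)
  (mmap (@malgC (cmonom RI) C) (cmeval (@pi1_img R K))).

Lemma pi1_Tv n (a b : 'I_K) :
  pi1_pullback (Tv R n a b) = psibv R a * psiv R b * ((2%:R)^-1%:MP * Btilde R K) ^+ n.
Proof. exact: mmap_cmevalU. Qed.

Lemma pi1_pullback_gens (g : CLGL R K) : I1'_gens g -> pi1_pullback g = 0.
Proof. exact: (rmorph_binomial_gens (g := @pi1_pullback R K) pi1_Tv). Qed.

Definition monomial_img (t : TI) : CRep R K :=
  psibv R t.1.2 * psiv R t.2 * Bv R K ^+ t.1.1.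

Definition detilde_img (i : RI) : CRep R K :=
  if i is None then 2%:R * Bv R K - \sum_(j < K) psiv R j * psibv R j else << ucm i >>.

Definition detilde : CRep R K -> CRep R K := mmap (@malgC _ C) (cmeval detilde_img).
HB.instance Definition _ := GRing.RMorphism.copy detilde
  (mmap (@malgC (cmonom RI) C) (cmeval detilde_img)).

Lemma detilde_var (i : RI) : detilde << ucm i >> = detilde_img i.
Proof. exact: mmap_cmevalU. Qed.

(* Rewrite with these only at localized positions: matching psiv j against
   psibv j up to conversion unfolds both monomials and does not terminate
   in practice. *)
Lemma detilde_psiv j : detilde (psiv R j) = psiv R j.
Proof. exact: mmap_cmevalU. Qed.

Lemma detilde_psibv j : detilde (psibv R j) = psibv R j.
Proof. exact: mmap_cmevalU. Qed.

Lemma detildeC (c : C) : detilde c%:MP = c%:MP.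
Proof. exact: mmapC. Qed.

Lemma detildeM (x y : CRep R K) : detilde (x * y) = detilde x * detilde y.
Proof. exact: rmorphM. Qed.

Lemma detildeD (x y : CRep R K) : detilde (x + y) = detilde x + detilde y.
Proof. exact: rmorphD. Qed.

Lemma detilde_Btilde : detilde ((2%:R)^-1%:MP * Btilde R K) = Bv R K.
Proof.
have two_neq0 : (2%:R : C) != 0 by rewrite pnatr_eq0.
rewrite detildeM detildeC detildeD rmorph_sum /=.
under eq_bigr => j _ do rewrite detildeM [X in X * _]detilde_psiv detilde_psibv.
rewrite detilde_var /= subrK mulrA -mpolyC_nat -mpolyCM (mulVf two_neq0).
by rewrite mpolyC1E mul1r.
Qed.

Lemma detilde_pi1_img t : detilde (pi1_img R t) = monomial_img t.
Proof.
case: t => [[n a] b].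
exact: (rmorph_monomial _ (detilde_psibv a) (detilde_psiv b) detilde_Btilde).
Qed.

Definition monomial_pullback (f : CLGL R K) : CRep R K :=
  mmap (@malgC _ C) (cmeval monomial_img) f.

Lemma detilde_pi1_pullback f : detilde (pi1_pullback f) = monomial_pullback f.
Proof.
rewrite /pi1_pullback (rmorph_mmap detilde).
apply: eq_mmap => [c | m] /=; first exact: detildeC.
rewrite rmorph_prod /=; apply: eq_bigr => t _.
by rewrite rmorphXn /= detilde_pi1_img.
Qed.

Definition tmonom_key (t : TI) : cmonom RI :=
  mmul (mmul (ucm (Some (inr t.1.2))) (ucm (Some (inl t.2))))
       (iter t.1.1 (mmul (ucm None)) mone).

Definition shape_key (s : seq TI) : cmonom RI := \big[mmul/mone]_(t <- s) tmonom_key t.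

Lemma tmonom_keyE t i : tmonom_key t i =
  ((Some (inr t.1.2) == i) + (Some (inl t.2) == i)
   + (if i is None then t.1.1 else 0))%N.
Proof.
rewrite !cmM !cmU; congr (_ + _)%N.
by case: i => [x|]; elim: t.1.1 => [|n IH] /=; rewrite ?cm1 // cmM cmU IH.
Qed.

Lemma shape_key_deg (s : seq TI) : shape_key s None = tdeg s.
Proof. by rewrite cm_big; apply: eq_bigr => t _; rewrite tmonom_keyE. Qed.

Lemma shape_key_row (s : seq TI) (a : 'I_K) :
  shape_key s (Some (inr a)) = count_mem a (trows s).
Proof.
rewrite cm_big; elim: s => [|t s IH]; rewrite ?big_nil // big_cons IH tmonom_keyE /=.
by rewrite !addn0.
Qed.

Lemma shape_key_col (s : seq TI) (b : 'I_K) :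
  shape_key s (Some (inl b)) = count_mem b (tcols s).
Proof.
rewrite cm_big; elim: s => [|t s IH]; rewrite ?big_nil // big_cons IH tmonom_keyE /=.
by rewrite addn0.
Qed.

Lemma same_shape_key (s s' : seq TI) : shape_key s = shape_key s' -> same_shape s s'.
Proof.
move=> eq_key; split; first by rewrite -!shape_key_deg eq_key.
  by apply/allP => a _ /=; rewrite -!shape_key_row eq_key.
by apply/allP => b _ /=; rewrite -!shape_key_col eq_key.
Qed.

Lemma Bv_expE n : Bv R K ^+ n = << iter n (mmul (ucm None)) mone >>.
Proof.
elim: n => [|n IH]; first by rewrite expr0 mpolyC1E.
by rewrite exprS iterS IH; symmetry; exact: malgU_mmul.
Qed.

Lemma monomial_img_key t : monomial_img t = << tmonom_key t >>.
Proof. by rewrite /monomial_img Bv_expE -!malgU_mmul. Qed.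

Lemma monomial_pullback_key f :
  monomial_pullback f = mmap (@malgC _ C) (fun m => << shape_key (cmonom_seq m) >>) f.
Proof.
apply: eq_mmap => // m; rewrite cmeval_seq malgU_prod.
by apply: eq_bigr => t _; rewrite monomial_img_key.
Qed.

Lemma malgU_tmonom (m : cmonom TI) : << m >> = tmonom (@Tv R K) (cmonom_seq m).
Proof. by rewrite malgU_cmonom_seq; apply: eq_bigr => -[[n a] b]. Qed.

End Pullback.

Theorem mainTheorem6 (R : realType) (K : nat) :
  radical_ideal (@I1' R K) ->
  forall f : CLGL R K, I1 f <-> I1' f.
Proof.
move=> _ f; split=> [pi1f0 | I1'f].
  apply: (ideal_gen_monomial_kernel (key := fun m => shape_key (cmonom_seq m))).
    move=> m m' /same_shape_key /(tcong_same_shape (@Tv R K)) [_].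
    by rewrite !malgU_tmonom.
  by rewrite -monomial_pullback_key -detilde_pi1_pullback pi1f0 rmorph0.
exact: rmorph_ideal_gen0 (@pi1_pullback_gens R K) I1'f.
Qed.
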